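(* Let $\tilde R\le0$ and let the intervention set $\mathcal I$ be partial; write $\tilde V^*(d_0)=\sup_\pi\tilde V^\pi(d_0)$. (1) For any policy $\pi$, $\tilde V^*(d_0)\ge\tilde J^\pi_+$, where $\tilde J^\pi_+=\frac1{1-\gamma}\mathbb E_{(s,a)\sim\tilde d^\pi}[r(s,a)\mathbb 1\{(s,a)\in(\mathcal S_{\mathrm{safe}}\times\mathcal A)\setminus\mathcal I\}]$. (2) If $\tilde{\mathcal M}$ admits an optimal policy, then it admits an optimal policy $\tilde\pi^*$ with $\mathbb E_{(s,a)\sim\tilde d^{\tilde\pi^*}}[\mathbb 1\{(s,a)\in\mathcal I\}]=0$. (3) If $\tilde R<0$, every optimal policy $\tilde\pi^*$ of $\tilde{\mathcal M}$ satisfies $\mathbb E_{(s,a)\sim\tilde d^{\tilde\pi^*}}[\mathbb 1\{(s,a)\in\mathcal I\}]=0$.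
   Context: $\mathcal M=(\mathcal S,\mathcal A,P,r,\gamma)$ is a discounted MDP with discrete state and action spaces, reward $r(s,a)\in[0,1]$, discount $\gamma\in[0,1)$, initial distribution $d_0$. $\mathcal S$ contains two distinguished states $s_\triangleright,s_\circ$ forming $\mathcal S_{\mathrm{unsafe}}$; $\mathcal S_{\mathrm{safe}}=\mathcal S\setminus\mathcal S_{\mathrm{unsafe}}$; from $s_\triangleright$ every action leads to $s_\circ$, $s_\circ$ is absorbing, $r=0$ on $\mathcal S_{\mathrm{unsafe}}$. Policies are stationary. An intervention rule $\mathcal G=(\bar Q,\mu,\eta)$ (backup policy $\mu$, $\eta\in[0,1]$, $\bar Q:\mathcal S_{\mathrm{safe}}\times\mathcal A\to[0,1]$) has intervention set $\mathcal I=\{(s,a)\in\mathcal S_{\mathrm{safe}}\times\mathcal A:\bar Q(s,a)-\mathbb E_{a'\sim\mu(\cdot|s)}\bar Q(s,a')>\eta\}$; a set $\mathcal X\subseteq\mathcal S_{\mathrm{safe}}\times\mathcal A$ is partial if for every $(s,a)\in\mathcal X$ there is $a'$ with $(s,a')\notin\mathcal X$. The absorbing MDP $\tilde{\mathcal M}=(\mathcal S\cup\{s_\dagger\},\mathcal A,\tilde P,\tilde r,\gamma)$ has $\tilde r(s,a)=\tilde R$ if $(s,a)\in\mathcal I$, $\tilde r(s_\dagger,a)=0$, $\tilde r=r$ otherwise; $\tilde P(\cdot|s,a)$ is the point mass at $s_\dagger$ if $(s,a)\in\mathcal I$ or $s=s_\dagger$, else $P(\cdot|s,a)$. Policies are extended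 to $s_\dagger$ arbitrarily. $\tilde V^\pi(d_0)$ is the value of $\pi$ in $\tilde{\mathcal M}$ from $s_0\sim d_0$, $\tilde d^\pi(s,a)=(1-\gamma)\sum_t\gamma^t\Pr(s_t=s,a_t=a)$ in $\tilde{\mathcal M}$; a policy is optimal if it attains $\tilde V^*(d_0)$. *)

(* Discrete (possibly infinite) state/action spaces,
   sums over them via [esum] (nonnegative extended-real summation). *)
From HB Require Import structures.
From mathcomp Require Import all_boot all_order all_algebra.
From mathcomp Require Import all_classical all_reals.
From mathcomp Require Import ereal esum.
Set Implicit Arguments. Unset Strict Implicit. Unset Printing Implicit Defensive.
Import Order.TTheory GRing.Theory Num.Theory.
Local Open Scope classical_set_scope.
Local Open Scope ring_scope.

Section Defs.
Variables (R : realType) (S A : choiceType).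

Definition is_distr (T : choiceType) (p : T -> R) : Prop :=
  (forall x, 0 <= p x) /\ \esum_(x in [set: T]) (p x)%:E = 1%E.

Definition is_policy (pi : S -> A -> R) : Prop := forall s, is_distr (pi s).

Definition safe (s_tri s_circ s : S) : Prop := s <> s_tri /\ s <> s_circ.

Definition interv (s_tri s_circ : S) (Qbar : S -> A -> R) (mu : S -> A -> R)
  (eta : R) (s : S) (a : A) : Prop :=
  safe s_tri s_circ s /\
  (eta%:E < (Qbar s a)%:E - \esum_(a' in [set: A]) (mu s a' * Qbar s a')%:E)%E.

Definition partial_set (X : S -> A -> Prop) : Prop :=
  forall s a, X s a -> exists a', ~ X s a'.

(* Pr(s_t = s, a_t = a) in the absorbing MDP, for s in S (the extra absorbing
   state s_dagger is never left once entered; entering happens exactly from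
   pairs in I). *)
Fixpoint occ (I : S -> A -> Prop) (P : S -> A -> S -> R) (d0 : S -> R)
  (pi : S -> A -> R) (t : nat) (s : S) (a : A) : \bar R :=
  match t with
  | 0 => (d0 s * pi s a)%:E
  | t'.+1 =>
    ((\esum_(p in [set p : S * A | ~ I p.1 p.2])
        (occ I P d0 pi t' p.1 p.2 * (P p.1 p.2 s)%:E)) * (pi s a)%:E)%E
  end.

Definition dtil (I : S -> A -> Prop) (P : S -> A -> S -> R) (d0 : S -> R)
  (gamma : R) (pi : S -> A -> R) (s : S) (a : A) : \bar R :=
  ((1 - gamma)%:E * \esum_(t in [set: nat]) ((gamma ^+ t)%:E * occ I P d0 pi t s a))%E.

(* reward of the absorbing MDP on S x A (it is 0 at s_dagger) *)
Definition rtil (I : S -> A -> Prop) (r : S -> A -> R) (Rt : R) (s : S) (a : A) : R :=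
  if `[< I s a >] then Rt else r s a.

(* V~^pi(d0) = 1/(1-gamma) E_{d~^pi}[r~], the (absolutely convergent) signed
   sum being split into positive and negative parts. *)
Definition Vtil (I : S -> A -> Prop) (P : S -> A -> S -> R) (d0 : S -> R)
  (r : S -> A -> R) (Rt gamma : R) (pi : S -> A -> R) : \bar R :=
  ((1 - gamma)^-1%:E *
   (\esum_(p in [set: S * A])
       (dtil I P d0 gamma pi p.1 p.2 * (Num.max (rtil I r Rt p.1 p.2) 0)%:E)
    - \esum_(p in [set: S * A])
       (dtil I P d0 gamma pi p.1 p.2 * (Num.max (- rtil I r Rt p.1 p.2) 0)%:E)))%E.

Definition Vstar I P d0 r Rt gamma : \bar R :=
  ereal_sup [set Vtil I P d0 r Rt gamma pi | pi in is_policy].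

Definition optimal I P d0 r Rt gamma (pi : S -> A -> R) : Prop :=
  is_policy pi /\ Vtil I P d0 r Rt gamma pi = Vstar I P d0 r Rt gamma.

Definition Jplus (s_tri s_circ : S) I P d0 (r : S -> A -> R) gamma pi : \bar R :=
  ((1 - gamma)^-1%:E *
   \esum_(p in [set p : S * A | safe s_tri s_circ p.1 /\ ~ I p.1 p.2])
      (dtil I P d0 gamma pi p.1 p.2 * (r p.1 p.2)%:E))%E.

Definition interv_mass I P d0 gamma pi : \bar R :=
  \esum_(p in [set p : S * A | I p.1 p.2]) dtil I P d0 gamma pi p.1 p.2.

End Defs.

From HB Require Import structures.
From mathcomp Require Import all_boot all_order all_algebra.
From mathcomp Require Import all_classical all_reals.
From mathcomp Require Import ereal esum.
From mathcomp Require Import topology normedtype sequences lra.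
Import Order.TTheory GRing.Theory Num.Theory.
Local Open Scope classical_set_scope.
Local Open Scope ring_scope.

(* Split the value of a policy into its positive part
   [Vpos pi = E_{d~^pi}[max(r~,0)]] and its negative part [Vneg pi].  Since
   R~ <= 0, the reward r~ is nonnegative off the intervention set I and
   nonpositive on it, so [Vpos] only sees pairs outside I and [Vneg] only
   pairs inside I.  Because I is partial, every state has an action outside
   I; moving the mass a policy puts on I onto such an action gives a policy
   pi2 that never intervenes ("reallocation").  Its occupancy outside I
   dominates that of pi (occupancies are monotone in the policy on the
   non-absorbed pairs), and it has no negative part, hence
   [(1-gamma)^-1 Vpos pi <= V~^{pi2} <= V~^*].  The three claims follow:
   (1) J~^pi_+ <= (1-gamma)^-1 Vpos pi; (2) the reallocation of an optimal
   policy is optimal and has zero intervention mass; (3) for an optimal pi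
   the inequality forces [Vneg pi = 0], and when R~ < 0 the intervention
   mass is bounded by [Vneg pi / (-R~)]. *)

Section NonnegativeSums.
Variable R : realType.
Local Open Scope ereal_scope.

Lemma esumZ_le (T : choiceType) (D : set T) (c : \bar R) (f : T -> \bar R) :
  0 <= c -> (forall x, 0 <= f x) ->
  \esum_(i in D) (c * f i) <= c * \esum_(i in D) f i.
Proof.
move=> c0 f0; apply: ge_ereal_sup => _ [X [finX XD] <-].
rewrite -ge0_mule_fsumr //; apply: lee_wpmul2l => //.
by apply: ereal_sup_ubound; exists X.
Qed.

Lemma esum_subset_le (T : choiceType) (D1 D2 : set T) (f : T -> \bar R) :
  D1 `<=` D2 -> (forall x, 0 <= f x) ->
  \esum_(i in D1) f i <= \esum_(i in D2) f i.
Proof.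
move=> sub f0; rewrite (esum_mkcond D1) (esum_mkcond D2); apply: le_esum => i _.
have [iD1|iD1] := boolP (i \in D1).
  by rewrite (mem_set (sub _ (set_mem iD1))).
by case: ifP.
Qed.

Lemma esum_swap (T1 T2 : choiceType) (D1 : set T1) (D2 : set T2)
  (f : T1 -> T2 -> \bar R) : (forall i j, 0 <= f i j) ->
  \esum_(i in D1) \esum_(j in D2) f i j = \esum_(j in D2) \esum_(i in D1) f i j.
Proof.
move=> f0; rewrite !esum_esum //.
rewrite (@reindex_esum R _ _ (D2 `*`` fun _ => D1) (D1 `*`` fun _ => D2)
  (fun k => (k.2, k.1)) (fun k => f k.1 k.2)) //.
split.
- by move=> [a b] /= [? ?]; split.
- by move=> [a b] [c d] _ _ /= [-> ->].
- by move=> [a b] [? ?]; exists (b, a).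
Qed.

Lemma esum_setT_pair (T1 T2 : choiceType) (f : T1 * T2 -> \bar R) :
  (forall x, 0 <= f x) ->
  \esum_(p in [set: T1 * T2]) f p =
  \esum_(i in [set: T1]) \esum_(j in [set: T2]) f (i, j).
Proof.
move=> f0; rewrite esum_esum //.
have -> : [set: T1] `*`` (fun _ => [set: T2]) = [set: T1 * T2].
  by apply/seteqP; split.
by apply: eq_esum => -[].
Qed.

Lemma esum_point (T : choiceType) (x0 : T) (m : \bar R) : 0 <= m ->
  \esum_(i in [set: T]) (if i == x0 then m else 0) = m.
Proof.
move=> m0; transitivity (\esum_(i in [set x0]) (if i == x0 then m else 0)).
  rewrite [RHS]esum_mkcond; apply: eq_esum => i _.
  by case: eqP => [->|_]; [rewrite mem_set|case: ifP].
by rewrite esum_set1 eqxx.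
Qed.

Lemma geometric_esum_le (g : R) : (0 <= g < 1)%R ->
  ((1 - g)%R%:E * (\esum_(t in [set: nat]) (g ^+ t)%:E) <= 1)%E.
Proof.
move=> /andP[g0 g1]; have g1' : (0 < 1 - g)%R by rewrite subr_gt0.
have series_le : \esum_(t in [set: nat]) (g ^+ t)%:E <= ((1 - g)^-1)%R%:E.
  rewrite -nneseries_esumT; last by move=> n; rewrite lee_fin exprn_ge0.
  apply: lime_le; first by apply: is_cvg_nneseries => n _ _; rewrite lee_fin exprn_ge0.
  apply: nearW => n; rewrite sumEFin lee_fin big_mkord.
  rewrite -[X in (_ <= X)%R]div1r ler_pdivlMr //.
  have -> : ((\sum_(i < n) g ^+ i) * (1 - g) = 1 - g ^+ n)%R.
    by rewrite -opprB mulrN mulrC -subrX1 opprB.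
  by rewrite lerBlDr lerDl exprn_ge0.
apply: (le_trans (lee_wpmul2l _ series_le)); first by rewrite lee_fin ltW.
by rewrite -EFinM mulfV ?gt_eqF.
Qed.

End NonnegativeSums.
Arguments esumZ_le {R T} D c f.
Arguments esum_subset_le {R T} D1 D2 f.
Arguments geometric_esum_le {R g}.
Arguments esum_point {R T}.

Section Occupancy.
Context {R : realType} {S A : choiceType} {I : S -> A -> Prop}
  {P : S -> A -> S -> R} {d0 : S -> R} {gamma : R}.
Hypothesis HP : forall s a, is_distr (P s a).
Hypothesis Hd0 : is_distr d0.
Hypothesis Hg : (0 <= gamma < 1)%R.
Local Open Scope ereal_scope.

Let P_ge0 s a s' : (0 <= P s a s')%R. Proof. exact: (HP s a).1. Qed.

Let one_sub_gamma_ge0 : 0 <= (1 - gamma)%R%:E.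
Proof. by case/andP: Hg => _ g1; rewrite lee_fin subr_ge0 ltW. Qed.

Lemma occ_ge0 pi : (forall s a, 0 <= pi s a)%R ->
  forall t s a, 0 <= occ I P d0 pi t s a.
Proof.
move=> pi0; elim=> [|t IH] s a /=; first by rewrite lee_fin mulr_ge0 // Hd0.1.
apply: mule_ge0; last by rewrite lee_fin.
by apply: esum_ge0 => p _; apply: mule_ge0; rewrite // lee_fin.
Qed.

Lemma occ_mono pi pi2 :
  (forall s a, 0 <= pi s a)%R -> (forall s a, 0 <= pi2 s a)%R ->
  (forall s a, ~ I s a -> pi s a <= pi2 s a)%R ->
  forall t s a, ~ I s a -> occ I P d0 pi t s a <= occ I P d0 pi2 t s a.
Proof.
move=> pi0 pi20 le12; elim=> [|t IH] s a nI /=.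
  by rewrite lee_fin ler_wpM2l ?Hd0.1 ?le12.
apply: lee_pmul; rewrite ?lee_fin ?le12 //.
- by apply: esum_ge0 => p _; apply: mule_ge0; rewrite ?occ_ge0 ?lee_fin.
- apply: le_esum => p /= np; apply: lee_wpmul2r; first by rewrite lee_fin.
  exact: IH.
Qed.

Lemma dtil_ge0 pi : (forall s a, 0 <= pi s a)%R ->
  forall s a, 0 <= dtil I P d0 gamma pi s a.
Proof.
move=> pi0 s a; apply: mule_ge0 => //; apply: esum_ge0 => t _.
by apply: mule_ge0; rewrite ?occ_ge0 // lee_fin exprn_ge0 //; case/andP: Hg.
Qed.

Lemma dtil_mono pi pi2 :
  (forall s a, 0 <= pi s a)%R -> (forall s a, 0 <= pi2 s a)%R ->
  (forall s a, ~ I s a -> pi s a <= pi2 s a)%R ->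
  forall s a, ~ I s a -> dtil I P d0 gamma pi s a <= dtil I P d0 gamma pi2 s a.
Proof.
move=> pi0 pi20 le12 s a nI; apply: lee_wpmul2l => //.
apply: le_esum => t _; apply: lee_wpmul2l; last exact: occ_mono.
by rewrite lee_fin exprn_ge0 //; case/andP: Hg.
Qed.

Lemma dtil_zero pi : (forall s a, I s a -> pi s a = 0%R) ->
  forall s a, I s a -> dtil I P d0 gamma pi s a = 0.
Proof.
move=> pi_I s a Ia; rewrite /dtil esum1 ?mule0 // => -[|t] _ /=;
  by rewrite pi_I // ?mulr0 ?mule0.
Qed.

(* At every time the state-action distribution is a sub-probability: mass
   only leaks out into the absorbing state. *)
Lemma occ_total pi : is_policy pi -> forall t,
  \esum_(p in [set: S * A]) occ I P d0 pi t p.1 p.2 <= 1.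
Proof.
move=> Hpi; have pi0 s a : (0 <= pi s a)%R by exact: (Hpi s).1.
have occ0 := occ_ge0 _ pi0.
have row_le (s : S) (m : \bar R) : 0 <= m ->
    \esum_(a in [set: A]) (m * (pi s a)%:E) <= m.
  move=> m0; apply: le_trans (esumZ_le _ _ _ m0 _) _; first by move=> a; rewrite lee_fin.
  by rewrite (Hpi s).2 mule1.
elim=> [|t IH]; rewrite esum_setT_pair; try by move=> p; exact: occ0.
  rewrite -Hd0.2; apply: le_esum => s _ /=.
  under eq_esum do rewrite EFinM.
  by apply: row_le; rewrite lee_fin Hd0.1.
apply: le_trans IH => /=.
pose inflow s := \esum_(p in [set p : S * A | ~ I p.1 p.2])
  (occ I P d0 pi t p.1 p.2 * (P p.1 p.2 s)%:E).
apply: (@le_trans _ _ (\esum_(s in [set: S]) inflow s)).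
  apply: le_esum => s _; apply: (row_le s (inflow s)).
  by apply: esum_ge0 => p _; apply: mule_ge0; rewrite ?lee_fin.
rewrite esum_swap; last by move=> s p; apply: mule_ge0; rewrite ?lee_fin.
apply: (@le_trans _ _ (\esum_(p in [set p : S * A | ~ I p.1 p.2])
    occ I P d0 pi t p.1 p.2)); last first.
  by apply: esum_subset_le => // p; exact: occ0.
apply: le_esum => p _.
apply: (le_trans (esumZ_le _ _ _ (occ0 _ _ _) _)); first by move=> s; rewrite lee_fin.
by rewrite (HP _ _).2 mule1.
Qed.

Lemma dtil_total pi : is_policy pi ->
  \esum_(p in [set: S * A]) dtil I P d0 gamma pi p.1 p.2 <= 1.
Proof.
move=> Hpi; have pi0 s a : (0 <= pi s a)%R by exact: (Hpi s).1.
have gt0 t : 0 <= (gamma ^+ t)%:E by rewrite lee_fin exprn_ge0 //; case/andP: Hg.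
have term0 t p : 0 <= (gamma ^+ t)%:E * occ I P d0 pi t p.1 p.2.
  by apply: mule_ge0; rewrite ?occ_ge0.
apply: le_trans (esumZ_le _ _ _ one_sub_gamma_ge0 _) _.
  by move=> p; apply: esum_ge0 => t _.
apply: le_trans (geometric_esum_le Hg); apply: lee_wpmul2l => //.
rewrite esum_swap //; apply: le_esum => t _.
apply: le_trans (esumZ_le _ _ _ (gt0 t) _) _; first by move=> p; exact: occ_ge0.
by rewrite -[leRHS]mule1; apply: lee_wpmul2l => //; exact: occ_total.
Qed.

End Occupancy.

Section Reallocation.
Context {R : realType} {S A : choiceType} {I : S -> A -> Prop}.
Hypothesis Ipartial : partial_set I.
Local Open Scope ereal_scope.

(* A policy exists only if there are actions, so a partial I leaves some
   action free in every state. *)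
Lemma free_action (pi : S -> A -> R) : is_policy pi -> forall s, exists a, ~ I s a.
Proof.
move=> Hpi s; have [a _] : exists a : A, True.
  apply: contrapT => noA; have := (Hpi s).2.
  by rewrite esum1 // => [[] /eqP|a]; [rewrite eq_sym oner_eq0|exfalso; apply: noA; exists a].
have [//|allI] := pselect (exists a, ~ I s a).
have [a' nIa'] := Ipartial s a (contrapT (fun nIa => allI (ex_intro _ a nIa))).
by exists a'.
Qed.

Lemma reallocate (pi : S -> A -> R) : is_policy pi ->
  exists pi2, is_policy pi2 /\ (forall s a, ~ I s a -> pi s a <= pi2 s a)%R /\
    (forall s a, I s a -> pi2 s a = 0%R).
Proof.
move=> Hpi; have pi0 s a : (0 <= pi s a)%R by exact: (Hpi s).1.
have [a0 a0_free] := choice (free_action _ Hpi).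
pose mI s := \esum_(a in [set a | I s a]) (pi s a)%:E.
have mI_ge0 s : 0 <= mI s by apply: esum_ge0 => a _; rewrite lee_fin.
have mI_fin s : mI s \is a fin_num.
  rewrite ge0_fin_numE //; apply: le_lt_trans (ltry 1%R); rewrite -(Hpi s).2.
  by apply: esum_subset_le => // a; rewrite lee_fin.
pose pi2 s a := ((if `[< I s a >] then 0 else pi s a) +
  (if a == a0 s then fine (mI s) else 0))%R.
exists pi2; split; [|split].
- move=> s; split.
    by move=> a; apply: addr_ge0; case: ifP => //; rewrite fine_ge0.
  transitivity (\esum_(a in [set: A])
      ((if a \in ~` [set a | I s a] then (pi s a)%:E else 0) +
       (if a == a0 s then (fine (mI s))%:E else 0))).
    apply: eq_esum => a _; rewrite /pi2 EFinD; congr (_ + _); last by case: eqP.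
    case: asboolP => Ia; last by rewrite ifT // in_setC; apply/negP => /set_mem.
    by rewrite ifF //; apply/negbTE; rewrite in_setC negbK; exact: mem_set.
  rewrite esumD; first last.
  + by move=> a _; case: eqP; rewrite ?lee_fin ?fine_ge0.
  + by move=> a _; case: ifP; rewrite ?lee_fin.
  rewrite -esum_mkcondr setTI esum_point ?fineK ?lee_fin ?fine_ge0 //.
  rewrite -(Hpi s).2 (esumID [set a | I s a] [set: A]); last by move=> a _; rewrite lee_fin.
  by rewrite !setTI addeC.
- by move=> s a nI; rewrite /pi2 asboolF // lerDl; case: ifP; rewrite ?fine_ge0.
- move=> s a Ia; rewrite /pi2 asboolT // add0r.
  by case: eqP => // e; exfalso; apply: (a0_free s); rewrite -e.
Qed.

End Reallocation.

Section Value.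
Context {R : realType} {S A : choiceType} {I : S -> A -> Prop}
  {P : S -> A -> S -> R} {d0 : S -> R} {r : S -> A -> R} {Rt gamma : R}.
Hypothesis HP : forall s a, is_distr (P s a).
Hypothesis Hd0 : is_distr d0.
Hypothesis Hg : (0 <= gamma < 1)%R.
Hypothesis r_ge0 : forall s a, (0 <= r s a)%R.
Hypothesis Rt_le0 : (Rt <= 0)%R.
Local Open Scope ereal_scope.

Definition Vpos (pi : S -> A -> R) : \bar R :=
  \esum_(p in [set: S * A])
    (dtil I P d0 gamma pi p.1 p.2 * (Num.max (rtil I r Rt p.1 p.2) 0)%:E).
Definition Vneg (pi : S -> A -> R) : \bar R :=
  \esum_(p in [set: S * A])
    (dtil I P d0 gamma pi p.1 p.2 * (Num.max (- rtil I r Rt p.1 p.2) 0)%:E).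

Let disc : \bar R := ((1 - gamma)^-1)%R%:E.

Lemma Vtil_split pi : Vtil I P d0 r Rt gamma pi = disc * (Vpos pi - Vneg pi).
Proof. by []. Qed.

Let disc_fin : disc \is a fin_num. Proof. by []. Qed.

Let disc_gt0 : 0 < disc.
Proof. by case/andP: Hg => _ g1; rewrite lte_fin invr_gt0 subr_gt0. Qed.

Let rtil_pos_out s a : ~ I s a -> (Num.max (rtil I r Rt s a) 0 = r s a)%R.
Proof. by move=> nI; rewrite /rtil asboolF // max_l. Qed.

Let rtil_pos_in s a : I s a -> (Num.max (rtil I r Rt s a) 0 = 0)%R.
Proof. by move=> Ia; rewrite /rtil asboolT // max_r. Qed.

Let rtil_neg_out s a : ~ I s a -> (Num.max (- rtil I r Rt s a) 0 = 0)%R.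
Proof. by move=> nI; rewrite /rtil asboolF // max_r // oppr_le0. Qed.

Let max_ge0 (x : R) : 0 <= (Num.max x 0%R)%:E.
Proof. by rewrite lee_fin le_max lexx orbT. Qed.

Lemma Vpos_ge0 pi : (forall s a, 0 <= pi s a)%R -> 0 <= Vpos pi.
Proof. by move=> pi0; apply: esum_ge0 => p _; rewrite mule_ge0 ?dtil_ge0. Qed.

Lemma Vneg_ge0 pi : (forall s a, 0 <= pi s a)%R -> 0 <= Vneg pi.
Proof. by move=> pi0; apply: esum_ge0 => p _; rewrite mule_ge0 ?dtil_ge0. Qed.

(* With rewards in [0,1], the positive part is bounded by the total
   occupancy, hence finite. *)
Lemma Vpos_fin pi : (forall s a, r s a <= 1)%R -> is_policy pi ->
  Vpos pi \is a fin_num.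
Proof.
move=> r_le1 Hpi; have pi0 s a : (0 <= pi s a)%R by exact: (Hpi s).1.
rewrite ge0_fin_numE ?Vpos_ge0 //; apply: le_lt_trans (ltry 1%R).
apply: le_trans (dtil_total HP Hd0 Hg _ Hpi); apply: le_esum => p _.
rewrite -[leRHS]mule1; apply: lee_wpmul2l; first exact: dtil_ge0.
rewrite lee_fin ge_max ler01 andbT /rtil.
by case: asboolP => _; [exact: le_trans Rt_le0 ler01|exact: r_le1].
Qed.

Lemma Vtil_le_Vpos pi : (forall s a, 0 <= pi s a)%R ->
  Vtil I P d0 r Rt gamma pi <= disc * Vpos pi.
Proof.
move=> pi0; rewrite Vtil_split; apply: lee_wpmul2l; first exact: ltW.
by rewrite -[leRHS]sube0 leeB ?Vneg_ge0.
Qed.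

Lemma Vtil_never_intervening pi : (forall s a, 0 <= pi s a)%R ->
  (forall s a, I s a -> pi s a = 0%R) -> Vtil I P d0 r Rt gamma pi = disc * Vpos pi.
Proof.
move=> pi0 pi_I; rewrite Vtil_split; suff -> : Vneg pi = 0 by rewrite sube0.
apply: esum1 => p _; have [Ip|nIp] := pselect (I p.1 p.2).
  by rewrite (dtil_zero _ pi_I) // mul0e.
by rewrite rtil_neg_out // mule0.
Qed.

(* The positive part only sees pairs outside I, where occupancy is monotone. *)
Lemma Vpos_mono pi pi2 :
  (forall s a, 0 <= pi s a)%R -> (forall s a, 0 <= pi2 s a)%R ->
  (forall s a, ~ I s a -> pi s a <= pi2 s a)%R -> Vpos pi <= Vpos pi2.
Proof.
move=> pi0 pi20 le12; apply: le_esum => p _; have [Ip|nIp] := pselect (I p.1 p.2).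
  by rewrite rtil_pos_in // !mule0.
by apply: lee_wpmul2r => //; exact: dtil_mono.
Qed.

Lemma Jplus_le_Vpos (s_tri s_circ : S) pi : (forall s a, 0 <= pi s a)%R ->
  Jplus s_tri s_circ I P d0 r gamma pi <= disc * Vpos pi.
Proof.
move=> pi0; apply: lee_wpmul2l; first exact: ltW.
set safe_out := [set p : S * A | _ /\ _].
apply: (@le_trans _ _ (\esum_(p in safe_out)
    (dtil I P d0 gamma pi p.1 p.2 * (Num.max (rtil I r Rt p.1 p.2) 0%R)%:E))).
  by apply: le_esum => p [_ nIp]; rewrite rtil_pos_out.
by apply: esum_subset_le => // p; rewrite mule_ge0 ?dtil_ge0.
Qed.

Lemma interv_mass_le_Vneg pi : (Rt < 0)%R -> (forall s a, 0 <= pi s a)%R ->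
  interv_mass I P d0 gamma pi <= ((- Rt)^-1)%R%:E * Vneg pi.
Proof.
move=> Rt_lt0 pi0; have nRt_gt0 : (0 < - Rt)%R by rewrite oppr_gt0.
have dtil0 p := dtil_ge0 HP Hd0 Hg _ pi0 p.1 p.2.
rewrite /interv_mass (eq_esum (b := fun p => ((- Rt)^-1)%R%:E *
    (dtil I P d0 gamma pi p.1 p.2 * (- Rt)%:E))); last first.
  by move=> p _; rewrite muleCA -EFinM mulVf ?gt_eqF // mule1.
apply: le_trans (esumZ_le _ _ _ _ _) _; first by rewrite lee_fin ltW ?invr_gt0.
  by move=> p; rewrite mule_ge0 // lee_fin ltW.
apply: lee_wpmul2l; first by rewrite lee_fin ltW ?invr_gt0.
apply: (@le_trans _ _ (\esum_(p in [set p : S * A | I p.1 p.2])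
    (dtil I P d0 gamma pi p.1 p.2 * (Num.max (- rtil I r Rt p.1 p.2) 0%R)%:E))).
  by apply: le_esum => p Ip; rewrite /rtil asboolT // max_l // ltW.
by apply: esum_subset_le => // p; rewrite mule_ge0.
Qed.

Lemma Vneg_eq0 pi : (forall s a, r s a <= 1)%R -> is_policy pi ->
  disc * Vpos pi <= Vtil I P d0 r Rt gamma pi -> Vneg pi = 0.
Proof.
move=> r_le1 Hpi; have pi0 s a : (0 <= pi s a)%R by exact: (Hpi s).1.
rewrite Vtil_split lee_pmul2l //.
have := Vpos_fin _ r_le1 Hpi; have := Vneg_ge0 _ pi0.
case: (Vpos pi) => // x; case: (Vneg pi) => [y| |] y0 _ //.
by rewrite lee_fin in y0; rewrite -EFinB lee_fin => le; congr EFin; lra.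
Qed.

Lemma never_intervening_improvement pi : partial_set I -> is_policy pi ->
  exists pi2, [/\ is_policy pi2, interv_mass I P d0 gamma pi2 = 0 &
    disc * Vpos pi <= Vtil I P d0 r Rt gamma pi2].
Proof.
move=> Ipartial Hpi; have [pi2 [Hpi2 [le12 pi2_I]]] := reallocate Ipartial _ Hpi.
have pi0 s a : (0 <= pi s a)%R by exact: (Hpi s).1.
have pi20 s a : (0 <= pi2 s a)%R by exact: (Hpi2 s).1.
exists pi2; split => //.
  by apply: esum1 => p Ip; exact: dtil_zero.
rewrite Vtil_never_intervening //; apply: lee_wpmul2l; first exact: ltW.
exact: Vpos_mono.
Qed.

End Value.

Theorem mainTheorem16 (R : realType) (S A : choiceType)
  (P : S -> A -> S -> R) (r : S -> A -> R) (gamma : R) (d0 : S -> R)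
  (s_tri s_circ : S)
  (Qbar : S -> A -> R) (mu : S -> A -> R) (eta : R) (Rt : R) :
  (* MDP *)
  (forall s a, is_distr (P s a)) ->
  (forall s a, 0 <= r s a <= 1) ->
  0 <= gamma < 1 ->
  is_distr d0 ->
  (* unsafe states *)
  s_tri <> s_circ ->
  (forall a s', P s_tri a s' = if s' == s_circ then 1 else 0) ->
  (forall a s', P s_circ a s' = if s' == s_circ then 1 else 0) ->
  (forall a, r s_tri a = 0) -> (forall a, r s_circ a = 0) ->
  (* intervention rule *)
  is_policy mu ->
  0 <= eta <= 1 ->
  (forall s a, safe s_tri s_circ s -> 0 <= Qbar s a <= 1) ->
  (* hypotheses of the theorem *)
  Rt <= 0 ->
  partial_set (interv s_tri s_circ Qbar mu eta) ->
  let I := interv s_tri s_circ Qbar mu eta in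
  (* (1) *)
  (forall pi, is_policy pi ->
     (Jplus s_tri s_circ I P d0 r gamma pi <= Vstar I P d0 r Rt gamma)%E) /\
  (* (2) *)
  ((exists pi, optimal I P d0 r Rt gamma pi) ->
     exists pi, optimal I P d0 r Rt gamma pi /\ interv_mass I P d0 gamma pi = 0%E) /\
  (* (3) *)
  (Rt < 0 ->
     forall pi, optimal I P d0 r Rt gamma pi -> interv_mass I P d0 gamma pi = 0%E).
Proof.
move=> HP Hr Hg Hd0 _ _ _ _ _ _ _ _ Rt_le0 Ipartial I.
(* only the partiality of I matters, not how it arises from the rule *)
have {}Ipartial : partial_set I := Ipartial; clearbody I.
have r_ge0 s a : 0 <= r s a by case/andP: (Hr s a).
have r_le1 s a : r s a <= 1 by case/andP: (Hr s a).
have pi_ge0 (pi : S -> A -> R) : is_policy pi -> forall s a, 0 <= pi s a by move=> Hpi s a; case: (Hpi s).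
have le_Vstar pi : is_policy pi -> (Vtil I P d0 r Rt gamma pi <= Vstar I P d0 r Rt gamma)%E.
  by move=> Hpi; apply: ereal_sup_ubound; exists pi.
have improve := never_intervening_improvement HP Hd0 Hg r_ge0 Rt_le0 _ Ipartial.
split; [|split].
- move=> pi Hpi; have [pi2 [Hpi2 _ le2]] := improve pi Hpi.
  apply: le_trans (Jplus_le_Vpos HP Hd0 Hg r_ge0 _ _ _ (pi_ge0 _ Hpi)) _.
  exact: le_trans le2 (le_Vstar _ Hpi2).
- move=> [pi [Hpi opt]]; have [pi2 [Hpi2 no_interv le2]] := improve pi Hpi.
  exists pi2; split => //; split => //; apply/le_anti/andP; split; first exact: le_Vstar.
  by rewrite -opt; exact: le_trans (Vtil_le_Vpos HP Hd0 Hg _ (pi_ge0 _ Hpi)) le2.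
- move=> Rt_lt0 pi [Hpi opt]; have [pi2 [Hpi2 _ le2]] := improve pi Hpi.
  have := le_Vstar _ Hpi2; rewrite -opt => le_opt.
  have Vneg0 := Vneg_eq0 HP Hd0 Hg Rt_le0 _ r_le1 Hpi (le_trans le2 le_opt).
  apply/eqP; rewrite eq_le; apply/andP; split.
    apply: le_trans (interv_mass_le_Vneg (r := r) HP Hd0 Hg _ Rt_lt0 (pi_ge0 _ Hpi)) _.
    by rewrite Vneg0 mule0.
  by apply: esum_ge0 => p _; exact: dtil_ge0 HP Hd0 Hg _ (pi_ge0 _ Hpi) _ _.
Qed.
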